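(* Let $\beta$ be an ordered partition of $N$. For every $x\in X^\beta$ we have $\bar W^{\beta(x)}x\subseteq W^\beta$, and the map $\bigsqcup_{x\in X^\beta}\bar W^{\beta(x)}\to W^\beta$, $w\mapsto wx$ (for $w$ in the copy indexed by $x$), is a bijection.
   Context: Fix $N\ge2$. $\bar P=\bigoplus_{i=1}^N\mathbb Z\epsilon_i$ with $(\epsilon_i,\epsilon_j)=\delta_{ij}$; $\bar R=\{\alpha_{ij}=\epsilon_i-\epsilon_j:i\ne j\}$, $\bar R_+=\{\alpha_{ij}:i<j\}$, $\alpha_i=\alpha_{i,i+1}$, $\bar\Pi=\{\alpha_1,\dots,\alpha_{N-1}\}$; $\bar P_-=\{\eta\in\bar P:(\eta,\alpha)\le0\ \forall\alpha\in\bar R_+\}$. $\bar W=\mathfrak S_N$ acts by permuting indices; $W=\bar W\ltimes\bar P$ with elements $wt_\eta$, $wt_\eta w^{-1}=t_{w(\eta)}$. Affine roots (with formal $\delta$): $R=\{\bar\alpha+k\delta:\bar\alpha\in\bar R,k\in\mathbb Z\}$, $R_+=\{\bar\alpha+k\delta:\bar\alpha\in\bar R_+,k\ge0\}\cup\{-\bar\alpha+k\delta:\bar\alpha\in\bar R_+,k>0\}$, $R_-=R\setminus R_+$; $W$ acts on $R$ by $w(\bar\alpha+k\delta)=w(\bar\alpha)+k\delta$, $t_\eta(\bar\alpha+k\delta)=\bar\alpha+(k-(\eta,\bar\alpha))\delta$; $l(w)=\#(R_+\cap w^{-1}(R_-))$. An ordered partition $\gamma$ of $N$ gives blocks of consecutive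 indices of sizes $\gamma_1,\dots,\gamma_r$; $\bar R_\gamma=\{\alpha_{ij}:i,j\text{ in the same block}\}$, $\bar R_{\gamma,+}=\bar R_\gamma\cap\bar R_+$, $\bar\Pi_\gamma=\bar\Pi\cap\bar R_\gamma$, $\bar W_\gamma$ generated by $s_\alpha$, $\alpha\in\bar\Pi_\gamma$; $W^\gamma=\{w\in W:l(wu)\ge l(w)\ \forall u\in\bar W_\gamma\}$, $\bar W^\gamma=W^\gamma\cap\bar W$. For $w\in W$, $\beta(w)$ denotes the ordered partition of $N$ with $\bar\Pi_{\beta(w)}=\bar\Pi\cap w(\bar R_{\beta,+})$. For $w\in\bar W^\beta$, $\eta_w\in\bar P_-$ is defined by $(\eta_w,\epsilon_1)=0$ and $(\eta_w,\alpha_i)=-1$ if $\alpha_i\in w(\bar R_+\setminus\bar R_{\beta,+})$, $0$ otherwise; $\bar P_-(w)=\{\eta+\eta_w:\eta\in\bar P_-\}$; $X^\beta=\{t_\eta w:w\in\bar W^\beta,\eta\in\bar P_-(w)\}$. *)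

From HB Require Import structures.
From mathcomp Require Import all_boot all_order all_algebra all_fingroup.
From mathcomp Require Import finmap.
From mathcomp Require Import boolp classical_sets cardinality.
Set Implicit Arguments. Unset Strict Implicit. Unset Printing Implicit Defensive.
Import GRing.Theory Num.Theory.

Local Open Scope fset_scope.
Local Open Scope ring_scope.

(* Indices 1..N of the paper are 0..N-1 here (type 'I_N). *)

Definition ordpart (N : nat) (g : seq nat) : bool :=
  all (fun m => 0 < m)%N g && (sumn g == N).

Definition psums (g : seq nat) : seq nat :=
  [seq sumn (take k.+1 g) | k <- iota 0 (size g)].

(* block number of the (0-based) index i: blocks are consecutive intervals *)
Definition blk (g : seq nat) (i : nat) : nat := count (fun c => c <= i)%N (psums g).

Definition sameblk (g : seq nat) (i j : nat) : bool := blk g i == blk g j.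

Definition weight (N : nat) := {ffun 'I_N -> int}.

(* the element t_eta w is represented by the pair (eta, w) *)
Definition Welt (N : nat) := (weight N * {perm 'I_N})%type.

Definition tw (N : nat) (eta : weight N) (w : {perm 'I_N}) : Welt N := (eta, w).

(* w(mu) for w in Wbar: w(eps_i) = eps_{w i} *)
Definition wact_wt (N : nat) (w : {perm 'I_N}) (mu : weight N) : weight N :=
  [ffun a => mu ((w^-1)%g a)].

(* (t_eta w)(t_mu v) = t_{eta + w(mu)} (w o v);  mathcomp: (v * w)%g x = w (v x) *)
Definition Wmul (N : nat) (x y : Welt N) : Welt N :=
  ([ffun a => x.1 a + wact_wt x.2 y.1 a], (y.2 * x.2)%g).

Definition Wbar (N : nat) (w : {perm 'I_N}) : Welt N := (0, w).

(* (i, j, k) stands for eps_i - eps_j + k delta *)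
Definition aroot (N : nat) := ('I_N * 'I_N * int)%type.

Definition is_root (N : nat) (a : aroot N) : bool := a.1.1 != a.1.2.

Definition is_pos (N : nat) (a : aroot N) : bool :=
  is_root a &&
  (((a.1.1 < a.1.2)%N && (0 <= a.2)) || ((a.1.2 < a.1.1)%N && (0 < a.2))).

Definition is_neg (N : nat) (a : aroot N) : bool := is_root a && ~~ is_pos a.

(* (t_eta w)(eps_i - eps_j + k delta) = eps_{w i} - eps_{w j} + (k - (eta, eps_{w i} - eps_{w j})) delta *)
Definition Wact (N : nat) (x : Welt N) (a : aroot N) : aroot N :=
  (x.2 a.1.1, x.2 a.1.2, a.2 - (x.1 (x.2 a.1.1) - x.1 (x.2 a.1.2))).

Definition Wlen (N : nat) (x : Welt N) : nat :=
  size (fset_set (fun a : aroot N => is_pos a /\ is_neg (Wact x a))).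

(* the simple root alpha_i = eps_i - eps_{i+1} is the pair (i, j) with val j = (val i).+1 *)
Definition is_simple (N : nat) (i j : 'I_N) : bool := (val j == (val i).+1)%N.

Definition Pi_gamma (N : nat) (g : seq nat) : {set 'I_N * 'I_N} :=
  [set p | is_simple p.1 p.2 && sameblk g p.1 p.2].

Definition Wbar_gamma (N : nat) (g : seq nat) : {set {perm 'I_N}} :=
  <<[set tperm p.1 p.2 | p in Pi_gamma N g]>>%g.

Definition in_Wup (N : nat) (g : seq nat) (x : Welt N) : Prop :=
  forall u, u \in Wbar_gamma N g -> (Wlen x <= Wlen (Wmul x (Wbar u)))%N.

Definition in_Wbarup (N : nat) (g : seq nat) (w : {perm 'I_N}) : Prop :=
  in_Wup g (Wbar w).

(* the ordered partition of N whose set of "internal" simple roots alpha_i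
   (i < N-1) is given by the predicate P: blocks are cut after i exactly when ~~ P i *)
Definition part_of_pred (N : nat) (P : nat -> bool) : seq nat :=
  pairmap (fun a b => b - a)%N 0%N
    ([seq i.+1 | i <- iota 0 N.-1 & ~~ P i] ++ [:: N]).

(* alpha_i in x(Rbar_{beta,+}) *)
Definition simple_in_image (N : nat) (b : seq nat) (x : Welt N) (i : nat) : bool :=
  [exists a : 'I_N, exists c : 'I_N,
     [&& (a < c)%N, sameblk b a c &
        let r := Wact x (a, c, 0) in
        [&& val r.1.1 == i, val r.1.2 == i.+1 & r.2 == 0]]].

(* beta(x): Pibar_{beta(x)} = Pibar cap x(Rbar_{beta,+}) *)
Definition beta_of (N : nat) (b : seq nat) (x : Welt N) : seq nat :=
  part_of_pred N (simple_in_image b x).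

(* alpha_i in w(Rbar_+ \ Rbar_{beta,+}) *)
Definition simple_in_compl (N : nat) (b : seq nat) (w : {perm 'I_N}) (i : nat) : bool :=
  [exists a : 'I_N, exists c : 'I_N,
     [&& (a < c)%N, ~~ sameblk b a c, val (w a) == i & val (w c) == i.+1]].

(* eta_w: (eta_w, eps_1) = 0 and (eta_w, alpha_i) = -1 or 0; i.e.
   eta_w(k) = #{ i < k | alpha_i in w(Rbar_+ \ Rbar_{beta,+}) } *)
Definition eta_w (N : nat) (b : seq nat) (w : {perm 'I_N}) : weight N :=
  [ffun k : 'I_N => (count (simple_in_compl b w) (iota 0 k))%:Z].

Definition in_Pminus (N : nat) (eta : weight N) : Prop :=
  forall i j : 'I_N, (i < j)%N -> eta i - eta j <= 0.

Definition in_Pminus_w (N : nat) (b : seq nat) (w : {perm 'I_N}) (mu : weight N) : Prop :=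
  exists eta : weight N, in_Pminus eta /\ mu = [ffun k => eta k + eta_w b w k].

Definition in_X (N : nat) (b : seq nat) (x : Welt N) : Prop :=
  exists (w : {perm 'I_N}) (eta : weight N),
    [/\ in_Wbarup b w, in_Pminus_w b w eta & x = tw eta w].

(* Write [x = t_mu v] and call [a |-> mu (v a)] the levels of [x].  Minimality in a
   coset of [Wbar_gamma] means that every positive root of a [gamma]-block is sent to a
   positive root, i.e. that [v], refined by the levels, increases on [gamma]-blocks.
   For [x] in [X^beta] the levels determine [v]: it lists the indices by increasing
   level, then by decreasing [beta]-block, then by increasing index.  Left
   multiplication by [w] in [Wbar] keeps the levels and only reorders indices inside a
   level set, where the [beta(x)]-blocks are the [beta]-blocks read in increasing
   order.  Hence [w x] is in [W^beta] for [w] in [Wbar^beta(x)], the levels of [w x]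
   recover [x] and then [w], and sorting the levels of any [y = t_nu pi] in [W^beta]
   produces [x] and [w = v^-1 pi]. *)

From mathcomp Require Import all_boot all_order all_algebra all_fingroup.
From mathcomp Require Import finmap.
From mathcomp Require Import classical_sets cardinality.
From mathcomp Require Import zify.
Set Implicit Arguments. Unset Strict Implicit. Unset Printing Implicit Defensive.
Import Order.TTheory GRing.Theory Num.Theory.

Local Open Scope ring_scope.

Lemma chain_adjacent N (R : rel 'I_N) (a c : 'I_N) : transitive R ->
  (forall d d' : 'I_N, d' = d.+1 :> nat -> (a <= d)%N -> (d' <= c)%N -> R d d') ->
  (a < c)%N -> R a c.
Proof.
move=> Rt Rstep ac.
suff reach k (c' : 'I_N) : c' = (a + k.+1)%N :> nat -> (c' <= c)%N -> R a c'.
  by apply: (reach (c - a.+1)%N) => //; rewrite -addSnnS subnKC.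
elim: k c' => [|k IH] c' ec' c'c; first by apply: Rstep => //; lia.
have lt_N : (a + k.+1 < N)%N by have := ltn_ord c'; lia.
apply: (Rt (Ordinal lt_N)); first by apply: IH => //=; lia.
by apply: Rstep => //=; lia.
Qed.

Lemma adjacent_neq N (d d' : 'I_N) : d' = d.+1 :> nat -> d != d'.
Proof. by move=> dd'; rewrite -(inj_eq val_inj) /= dd' neq_ltn ltnSn. Qed.

Lemma blk_mono g : {homo blk g : i j / (i <= j)%N}.
Proof. by move=> i j ij; apply: sub_count => c /= /leq_trans; apply. Qed.

Lemma sameblk_inner g (a d d' c : nat) :
  (a <= d)%N -> (d <= d')%N -> (d' <= c)%N -> sameblk g a c -> sameblk g d d'.
Proof.
move=> /(blk_mono g) ad /(blk_mono g) dd' /(blk_mono g) d'c /eqP ac.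
by apply/eqP/anti_leq; rewrite dd' (leq_trans d'c) // -ac.
Qed.

(* [Wprec y a c] says that [y] maps [eps_a - eps_c] to a positive root
   (lemma [is_pos_Wact0]). *)
Definition Wprec N (y : Welt N) (a c : 'I_N) : bool :=
  (y.1 (y.2 a) < y.1 (y.2 c)) || ((y.1 (y.2 a) == y.1 (y.2 c)) && (y.2 a < y.2 c)%N).

Lemma is_pos_rootE N (p q : 'I_N) (m : int) : p != q ->
  is_pos (p, q, m) = ((p < q)%N && (0 <= m)) || ((q < p)%N && (0 < m)).
Proof. by rewrite /is_pos /is_root /= => ->. Qed.

Lemma is_pos_Wact0 N (y : Welt N) (a c : 'I_N) : is_pos (Wact y (a, c, 0)) = Wprec y a c.
Proof.
have [<-|ac] := eqVneq a c; first by rewrite /Wact /is_pos /is_root /Wprec /= eqxx ltxx ltnn andbF.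
have vac : y.2 a != y.2 c by rewrite (inj_eq perm_inj).
rewrite /Wact /Wprec /= is_pos_rootE // sub0r opprB subr_ge0 subr_gt0.
case: ltngtP => [||/val_inj eq_ac] /=.
- by rewrite andbT orbF le_eqVlt orbC.
- by rewrite andbF orbF.
- by rewrite eq_ac eqxx in vac.
Qed.

Lemma is_neg_Wact N (y : Welt N) (a : aroot N) : is_root a ->
  is_neg (Wact y a) = ~~ is_pos (Wact y a).
Proof. by rewrite /is_neg /is_root /= (inj_eq perm_inj) => ->. Qed.

Lemma Wprec_trans N (y : Welt N) : transitive (Wprec y).
Proof.
move=> m a c; rewrite /Wprec.
case/orP=> [h1|/andP[/eqP-> h1]]; case/orP=> [h2|/andP[/eqP<- h2]].
- by rewrite (lt_trans h1 h2).
- by rewrite h1.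
- by rewrite h2.
- by rewrite eqxx (ltn_trans h1 h2) orbT.
Qed.

Lemma Wprec_total N (y : Welt N) (a c : 'I_N) : a != c -> Wprec y a c || Wprec y c a.
Proof.
move=> ac; have vac : y.2 a != y.2 c by rewrite (inj_eq perm_inj).
rewrite /Wprec; case: ltgtP => //= _.
by case: ltngtP vac => // /val_inj ->; rewrite eqxx.
Qed.

Lemma Wprec_Wbar N (w : {perm 'I_N}) (a c : 'I_N) : Wprec (Wbar w) a c = (w a < w c)%N.
Proof. by rewrite /Wprec /Wbar /= !ffunE ltxx eqxx. Qed.

Lemma Wmul_Wbar_r N (y : Welt N) (u : {perm 'I_N}) : Wmul y (Wbar u) = (y.1, (u * y.2)%g).
Proof. by rewrite /Wmul /=; congr pair; apply/ffunP => a; rewrite !ffunE addr0. Qed.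

Lemma Wact_Wmul_Wbar N (y : Welt N) (u : {perm 'I_N}) (i j : 'I_N) (k : int) :
  Wact (Wmul y (Wbar u)) (i, j, k) = Wact y (u i, u j, k).
Proof. by rewrite Wmul_Wbar_r /Wact /= !permM. Qed.

Lemma Wprec_Wmul_Wbar N (y : Welt N) (u : {perm 'I_N}) (a c : 'I_N) :
  Wprec (Wmul y (Wbar u)) a c = Wprec y (u a) (u c).
Proof. by rewrite -!is_pos_Wact0 Wact_Wmul_Wbar. Qed.

(* Only finitely many affine roots can be inverted: a root [eps_i - eps_j + k delta] with
   [k > B] stays positive, [B] bounding the weight differences.  So [Wlen] is the cardinal
   of a set of triples [(i, j, k)] with [k] ranging over ['I_B.+1]. *)
Definition box N B := ('I_N * 'I_N * 'I_B.+1)%type.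

Definition box_root N B (t : box N B) : aroot N := (t.1.1, t.1.2, Posz (val t.2)).

Definition inversions N B (y : Welt N) : {set box N B} :=
  [set t | is_pos (box_root t) && is_neg (Wact y (box_root t))].

Lemma box_root_inj N B : injective (@box_root N B).
Proof. by move=> [[i j] k] [[i' j'] k'] [/= -> -> /val_inj ->]. Qed.

Lemma inversion_height_bound N (y : Welt N) (a : aroot N) :
  is_pos a -> is_neg (Wact y a) -> 0 <= a.2 <= y.1 (y.2 a.1.1) - y.1 (y.2 a.1.2).
Proof.
case: a => [[i j] k] /andP[ij pos] /andP[_]; rewrite /Wact /= in ij pos *.
rewrite is_pos_rootE ?(inj_eq perm_inj) // subr_ge0 subr_gt0.
have k_ge0 : 0 <= k by case/orP: pos => /andP[_ h] //; apply: ltW.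
rewrite k_ge0; case: ltngtP => [_|_|/val_inj/perm_inj eq_ij] /=.
- by rewrite orbF -ltNge => /ltW.
- by rewrite -leNgt.
- by rewrite eq_ij /is_root eqxx in ij.
Qed.

Lemma weight_diff_bound N (m : weight N) : exists B : nat, forall p q, m p - m q <= B%:Z.
Proof.
exists (\sum_q `|m q| + \sum_q `|m q|)%N => p q.
have le_sum r : (`|m r| <= \sum_q `|m q|)%N by rewrite (bigD1 r) //= leq_addr.
apply: le_trans (ler_norm _) _; apply: le_trans (ler_normB _ _) _.
by rewrite -!abszE PoszD lerD // lez_nat.
Qed.

Lemma Wlen_inversions N B (y : Welt N) :
  (forall p q, y.1 p - y.1 q <= B%:Z) -> Wlen y = #|inversions B y|.
Proof.
move=> yB.
have inv_image : (fun a : aroot N => is_pos a /\ is_neg (Wact y a)) =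
          [set` [fset box_root t | t in inversions B y]%fset]%classic.
  apply/seteqP; split => [a [pos neg]|a /imfsetP[t]]; last first.
    by rewrite inE => /andP[pos neg] ->.
  have /andP[k_ge0 k_le] := inversion_height_bound pos neg.
  case: a k_ge0 k_le pos neg => [[i j] [k|//]] _ /= k_le pos neg.
  have k_lt : (k < B.+1)%N by rewrite ltnS -lez_nat (le_trans k_le).
  by apply/imfsetP; exists (i, j, Ordinal k_lt); rewrite // inE pos neg.
by rewrite /Wlen inv_image set_fsetK card_imfset ?cardE //=; apply: box_root_inj.
Qed.

Definition box_relabel N B (u : {perm 'I_N}) (t : box N B) : box N B :=
  (u t.1.1, u t.1.2, t.2).

Lemma box_relabel_inj N B (u : {perm 'I_N}) : injective (@box_relabel N B u).
Proof. by move=> [[i j] k] [[i' j'] k'] [/perm_inj -> /perm_inj -> ->]. Qed.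

Lemma relabel_inversions_sub N B (y : Welt N) (u : {perm 'I_N}) :
  (forall i j : 'I_N, (i < j)%N -> ~~ Wprec y i j -> ((u^-1)%g i < (u^-1)%g j)%N) ->
  box_relabel (u^-1)%g @: inversions B y \subset inversions B (Wmul y (Wbar u)).
Proof.
move=> keep; apply/fintype.subsetP => _ /imsetP[[[i j] k] + ->]; rewrite !inE /box_root /=.
case/andP=> /[dup] pos /andP[ij _] neg.
rewrite Wact_Wmul_Wbar !permKV neg andbT is_pos_rootE ?(inj_eq perm_inj) //.
move: pos; rewrite is_pos_rootE // lez_nat ltz_nat leq0n !andbT.
case: k ij neg => [[|k] ?] ij neg /=; rewrite ?andbT ?andbF ?orbT ?orbF //; last first.
  move=> _; rewrite -neq_ltn; apply: contraTneq ij => /val_inj/perm_inj ->.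
  by rewrite /is_root eqxx.
move=> lt_ij; apply: keep; rewrite // -is_pos_Wact0 -is_neg_Wact //; exact: neg.
Qed.

Lemma Wlen_Wmul_Wbar_ge N (y : Welt N) (u : {perm 'I_N}) :
  (forall i j : 'I_N, (i < j)%N -> ~~ Wprec y i j -> ((u^-1)%g i < (u^-1)%g j)%N) ->
  (Wlen y <= Wlen (Wmul y (Wbar u)))%N.
Proof.
move=> keep; have [B yB] := weight_diff_bound y.1.
rewrite (Wlen_inversions yB) (@Wlen_inversions _ B) ?Wmul_Wbar_r //.
rewrite -(card_imset _ (@box_relabel_inj _ _ (u^-1)%g)) subset_leq_card //.
by rewrite -Wmul_Wbar_r; apply: relabel_inversions_sub.
Qed.

(* The simple reflection [s_d] permutes the positive roots other than [alpha_d]. *)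
Lemma ltn_tperm_adjacent N (d d' i j : 'I_N) : d' = d.+1 :> nat -> (i < j)%N ->
  ~~ ((i == d) && (j == d')) -> (tperm d d' i < tperm d d' j)%N.
Proof.
move=> dd' ij not_alpha.
have neq_val (z z' : 'I_N) : z <> z' -> z <> z' :> nat by move=> + /val_inj.
case: tpermP => [ei|ei|ni1 ni2]; case: tpermP => [ej|ej|nj1 nj2];
  rewrite ?ei ?ej ?eqxx ?andbT ?andTb in ij not_alpha *.
all: try have := neq_val _ _ ni1; try have := neq_val _ _ ni2;
     try have := neq_val _ _ nj1; try have := neq_val _ _ nj2; lia.
Qed.

Lemma Wlen_Wmul_tperm_lt N (y : Welt N) (d d' : 'I_N) : d' = d.+1 :> nat ->
  ~~ Wprec y d d' -> (Wlen (Wmul y (Wbar (tperm d d'))) < Wlen y)%N.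
Proof.
move=> dd' not_prec; set s := tperm d d'; set ys := Wmul y (Wbar s).
have d_neq := adjacent_neq dd'.
have ysK : Wmul ys (Wbar s) = y.
  by rewrite /ys !Wmul_Wbar_r mulgA tperm2 mul1g; case: (y).
have sV : (s^-1)%g = s by rewrite /s tpermV.
have [B yB] := weight_diff_bound y.1.
rewrite (Wlen_inversions yB) (@Wlen_inversions _ B ys); last by rewrite /ys Wmul_Wbar_r.
have sub : box_relabel s @: inversions B ys \subset inversions B y.
  have := @relabel_inversions_sub N B ys s; rewrite ysK sV; apply=> i j ij.
  rewrite Wprec_Wmul_Wbar; apply: contraR => not_lt.
  have /andP[/eqP-> /eqP->] : (i == d) && (j == d').
    by apply: contraR not_lt => ?; apply: ltn_tperm_adjacent.
  rewrite /s tpermL tpermR.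
  by have := Wprec_total y d_neq; rewrite (negbTE not_prec).
rewrite -(card_imset _ (@box_relabel_inj _ _ s)); apply: proper_card.
rewrite finset.properEneq sub andbT; apply/eqP => same.
have : ((d, d', ord0) : box N B) \in inversions B y.
  rewrite inE /box_root /= is_pos_rootE // dd' ltnSn /= is_neg_Wact //.
  by rewrite is_pos_Wact0.
rewrite -same => /imsetP[[[i j] k]].
rewrite inE /box_root /box_relabel /= => /andP[+ _] [ei ej ek].
have [-> ->] : i = d' /\ j = d.
  by rewrite -(tpermK d d' i) -(tpermK d d' j) -/s -ei -ej /s tpermL tpermR.
by rewrite -ek is_pos_rootE 1?eq_sym // ltz_nat ltnn andbF orbF dd' ltnNge leqnSn.
Qed.

Lemma Wbar_gamma_blk N g (u : {perm 'I_N}) :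
  u \in Wbar_gamma N g -> forall a, blk g (u a) = blk g a.
Proof.
case/gen_prodgP=> n [c gen_c ->].
elim/big_ind: _ => [a|s t Hs Ht a|i _ a]; first by rewrite perm1.
  by rewrite permM Ht Hs.
have /imsetP[p] := gen_c i; rewrite inE => /andP[_ /eqP same_p] ->.
by case: tpermP => [->|->|//]; rewrite same_p.
Qed.

Lemma in_WupP N g (y : Welt N) :
  in_Wup g y <-> (forall a c : 'I_N, (a < c)%N -> sameblk g a c -> Wprec y a c).
Proof.
split=> [minimal a c | blocks_pos u Wu]; last first.
  apply: Wlen_Wmul_Wbar_ge => i j ij not_prec.
  have lt_blk : (blk g i < blk g j)%N.
    rewrite ltn_neqAle (blk_mono g (ltnW ij)) andbT.
    by apply: contra not_prec; apply: blocks_pos.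
  have uV_blk k : blk g ((u^-1)%g k) = blk g k by rewrite -{2}(permKV u k) (Wbar_gamma_blk Wu).
  by rewrite ltnNge; apply: contraL lt_blk => /(blk_mono g); rewrite !uV_blk -leqNgt.
move=> ac same_ac; apply: (@chain_adjacent _ (Wprec y) _ _ (@Wprec_trans _ y) _ ac).
move=> d d' dd' ad d'c; apply/negPn/negP => not_prec.
have tperm_in : tperm d d' \in Wbar_gamma N g.
  apply: mem_gen; apply/imsetP; exists (d, d') => //; rewrite inE /is_simple /= dd' eqxx /=.
  by apply: (sameblk_inner ad (leqnSn d) _ same_ac); rewrite -dd'.
by have := minimal _ tperm_in; rewrite leqNgt (Wlen_Wmul_tperm_lt dd' not_prec).
Qed.

Lemma in_WbarupP N g (w : {perm 'I_N}) :
  in_Wbarup g w <-> (forall a c : 'I_N, (a < c)%N -> sameblk g a c -> (w a < w c)%N).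
Proof.
rewrite /in_Wbarup in_WupP.
by split=> blocks a c ac same; [rewrite -Wprec_Wbar | rewrite Wprec_Wbar]; apply: blocks.
Qed.

Lemma take_pairmap_sub (x0 : nat) (s : seq nat) k : path leq x0 s -> (k < size s)%N ->
  sumn (take k.+1 (pairmap (fun a b => b - a)%N x0 s)) = (nth 0%N s k - x0)%N.
Proof.
elim: s x0 k => [|y s IH] x0 [|k] //= /andP[x0y ys] lt_k; first by rewrite take0 addn0.
rewrite (IH y k ys lt_k).
have : (y <= nth 0%N s k)%N.
  by move: ys; rewrite (path_sortedE leq_trans) => /andP[/all_nthP y_le _]; apply: y_le.
lia.
Qed.

Lemma psums_pairmap (s : seq nat) : path leq 0%N s ->
  psums (pairmap (fun a b => b - a)%N 0%N s) = s.
Proof.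
move=> s_sorted; rewrite /psums size_pairmap -[RHS](mkseq_nth 0%N s).
by apply/eq_in_map => k; rewrite mem_iota => /andP[_ lt_k]; rewrite take_pairmap_sub ?subn0.
Qed.

Lemma count_iota_prefix (a : pred nat) k n : (k <= n)%N ->
  count (fun t => a t && (t < k)%N) (iota 0 n) = count a (iota 0 k).
Proof.
move=> kn; rewrite -(subnKC kn) iotaD count_cat add0n.
rewrite (@eq_in_count _ _ a) => [|t]; last by rewrite mem_iota => /andP[_ ->]; rewrite andbT.
rewrite [X in (_ + X)%N](@eq_in_count _ _ pred0) ?count_pred0 ?addn0 // => t.
by rewrite mem_iota leqNgt => /andP[/negbTE->]; rewrite andbF.
Qed.

Lemma count_iotaS (a : pred nat) k : count a (iota 0 k.+1) = (count a (iota 0 k) + a k)%N.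
Proof. by rewrite -addn1 iotaD count_cat /= addn0. Qed.

Lemma blk_part_of_pred N (P : nat -> bool) i : (i < N)%N ->
  blk (part_of_pred N P) i = count (predC P) (iota 0 i).
Proof.
case: N => // n lt_in; rewrite /blk /part_of_pred psums_pairmap /=; last first.
  have iota1 : iota 1 n.+1 = [seq t.+1 | t <- iota 0 n] ++ [:: n.+1].
    by rewrite -[n.+1]addn1 iotaD (iotaDl 1 0) (eq_map add1n) add1n addn1.
  apply: (@subseq_path _ _ leq_trans _ _ (iota 1 n.+1)); last exact: iota_sorted 0 n.+2.
  by rewrite iota1; apply: cat_subseq => //; apply/map_subseq/filter_subseq.
rewrite count_cat count_map count_filter /= leqNgt lt_in -[RHS]addn0; congr (_ + _).
rewrite -(@count_iota_prefix _ i n) //.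
by apply: eq_count => t; rewrite /= andbC.
Qed.

Lemma sameblk_part_of_pred N (P : nat -> bool) d : (d.+1 < N)%N ->
  sameblk (part_of_pred N P) d d.+1 = P d.
Proof.
move=> lt_dN; rewrite /sameblk !blk_part_of_pred ?(ltnW lt_dN) // count_iotaS.
by rewrite -{1}[count _ _]addn0 eqn_add2l /=; case: (P d).
Qed.

Lemma eta_w_mono N b (w : {perm 'I_N}) (p q : 'I_N) :
  (p <= q)%N -> eta_w b w p <= eta_w b w q.
Proof. by move=> pq; rewrite !ffunE lez_nat -(subnKC pq) iotaD count_cat leq_addr. Qed.

Lemma eta_w_adjacent N b (w : {perm 'I_N}) (p p' : 'I_N) : p' = p.+1 :> nat ->
  eta_w b w p' = eta_w b w p + (simple_in_compl b w p : nat)%:Z.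
Proof. by move=> pp'; rewrite !ffunE pp' count_iotaS PoszD. Qed.

Lemma in_PminusP N (eta : weight N) :
  in_Pminus eta <-> (forall p q : 'I_N, (p <= q)%N -> eta p <= eta q).
Proof.
split=> [minus p q | mono i j ij]; last by rewrite subr_le0 mono // ltnW.
by rewrite leq_eqVlt => /orP[/eqP/val_inj-> // | /minus]; rewrite subr_le0.
Qed.

(* [t_mu v] is in [X^beta] iff [v] is in [Wbar^beta], [mu] is in [P_-], and [mu]
   strictly increases across every [alpha_p] in [v(R_+ \ R_{beta,+})]; the last two
   conditions say exactly that [mu - eta_v] is in [P_-]. *)
Lemma in_XP N b (x : Welt N) : in_X b x <->
  [/\ forall a c : 'I_N, (a < c)%N -> sameblk b a c -> (x.2 a < x.2 c)%N,
      forall p q : 'I_N, (p <= q)%N -> x.1 p <= x.1 q &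
      forall p p' : 'I_N, p' = p.+1 :> nat -> x.1 p = x.1 p' -> ~~ simple_in_compl b x.2 p].
Proof.
split=> [[v [mu [/in_WbarupP v_blocks [eta [/in_PminusP eta_mono ->]] ->]]] | ].
  have muE k : [ffun k => eta k + eta_w b v k] k = eta k + eta_w b v k by rewrite ffunE.
  split=> [//|p q pq|p p' pp'] /=; rewrite !muE; first by rewrite lerD ?eta_w_mono ?eta_mono.
  have := eta_mono p p'; rewrite (eta_w_adjacent _ _ pp') pp' leqnSn.
  by case: simple_in_compl => /= /(_ isT); lia.
case: x => mu v /= [v_blocks mu_mono mu_level]; exists v, mu; split=> //.
  exact/in_WbarupP.
exists [ffun k => mu k - eta_w b v k]; split; last by apply/ffunP => k; rewrite !ffunE subrK.
have etaE k : [ffun k => mu k - eta_w b v k] k = mu k - eta_w b v k by rewrite ffunE.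
apply/in_PminusP => p q; rewrite leq_eqVlt => /orP[/eqP/val_inj-> // | ].
apply: (@chain_adjacent _ (fun p q => _ p <= _ q)) => [? ? ?|d d' dd' _ _]; first exact: le_trans.
rewrite /= !etaE (eta_w_adjacent _ _ dd').
have := mu_mono d d'; rewrite dd' leqnSn => /(_ isT).
have := mu_level d d' dd'; case: simple_in_compl => /= [ne le|_ le]; last lia.
have : mu d < mu d' by rewrite lt_neqAle le andbT; apply/eqP => /ne.
lia.
Qed.

(* The order in which an element [t_mu v] of [X^beta] lists the indices, [g] being its
   levels [a |-> mu (v a)] (lemma [ltn_XltE]). *)
Definition Xlt N b (g : 'I_N -> int) (a c : 'I_N) : bool :=
  (g a < g c) ||
  ((g a == g c) && ((blk b c < blk b a)%N || ((blk b a == blk b c) && (a < c)%N))).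

Lemma Xlt_irr N b (g : 'I_N -> int) : irreflexive (Xlt b g).
Proof. by move=> a; rewrite /Xlt; lia. Qed.

Lemma Xlt_trans N b (g : 'I_N -> int) : transitive (Xlt b g).
Proof. by move=> c a e; rewrite /Xlt; lia. Qed.

Lemma Xlt_total N b (g : 'I_N -> int) (a c : 'I_N) : a != c -> Xlt b g a c || Xlt b g c a.
Proof. by move=> ac; have : (a : nat) != c by []; rewrite /Xlt; lia. Qed.

Section LevelSets.

Variables (N : nat) (b : seq nat) (mu : weight N) (v : {perm 'I_N}).
Hypothesis v_blocks : forall a c : 'I_N, (a < c)%N -> sameblk b a c -> (v a < v c)%N.
Hypothesis mu_mono : forall p q : 'I_N, (p <= q)%N -> mu p <= mu q.
Hypothesis mu_level :
  forall p p' : 'I_N, p' = p.+1 :> nat -> mu p = mu p' -> ~~ simple_in_compl b v p.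

Lemma mu_level_inner (p d q : 'I_N) :
  (p <= d)%N -> (d <= q)%N -> mu p = mu q -> mu d = mu p.
Proof. by move=> pd dq mu_pq; apply/eqP; rewrite eq_le (mu_mono pd) andbT mu_pq mu_mono. Qed.

Lemma level_blk_antitone (p q : 'I_N) : (p <= q)%N -> mu p = mu q ->
  (blk b ((v^-1)%g q) <= blk b ((v^-1)%g p))%N.
Proof.
rewrite leq_eqVlt => /orP[/eqP/val_inj-> // | pq mu_pq].
apply: (@chain_adjacent _ (fun p q => blk b ((v^-1)%g q) <= blk b ((v^-1)%g p))%N) pq.
  by move=> ? ? ? /= h1 h2; apply: leq_trans h2 h1.
move=> d d' dd' pd d'q /=; set a := (v^-1)%g d; set c := (v^-1)%g d'.
have mu_dd' : mu d = mu d'.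
  have dq : (d <= q)%N by apply: leq_trans d'q; rewrite dd'.
  have pd' : (p <= d')%N by apply: leq_trans pd _; rewrite dd'.
  by rewrite (mu_level_inner pd dq) // (mu_level_inner pd' d'q).
have not_compl := mu_level dd' mu_dd'.
case: (ltngtP a c) => [ac|ca|/val_inj/(congr1 v)].
- apply: eq_leq; apply/esym/eqP; apply: contraR not_compl => not_same.
  by apply/existsP; exists a; apply/existsP; exists c; rewrite ac not_same !permKV -dd' !eqxx.
- exact/blk_mono/ltnW.
- by rewrite !permKV => /eqP; rewrite (negbTE (adjacent_neq dd')).
Qed.

Lemma level_sameblk_beta (a c : 'I_N) : (a < c)%N -> sameblk b a c ->
  mu (v a) = mu (v c) -> sameblk (beta_of b (mu, v)) (v a) (v c).
Proof.
move=> ac same_ac mu_ac.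
apply: (@chain_adjacent _ (fun p q => sameblk (beta_of b (mu, v)) p q) _ _ _ _
          (v_blocks ac same_ac)).
  by move=> ? ? ?; rewrite /sameblk => /eqP-> /eqP->.
move=> d d' dd' ad d'c /=.
have lt_dN : (d.+1 < N)%N by rewrite -dd'.
rewrite /sameblk dd' -/(sameblk _ d d.+1) /beta_of sameblk_part_of_pred //.
set a' := (v^-1)%g d; set c' := (v^-1)%g d'.
have dd'_le : (d <= d')%N by rewrite dd'.
have mu_d : mu d = mu (v a) by apply: mu_level_inner (leq_trans dd'_le d'c) mu_ac.
have mu_d' : mu d' = mu (v a) by apply: mu_level_inner (leq_trans ad dd'_le) d'c mu_ac.
have same' : sameblk b a' c'.
  have := level_blk_antitone dd'_le (etrans mu_d (esym mu_d')).
  have := level_blk_antitone ad (esym mu_d); rewrite permK.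
  have := level_blk_antitone d'c (etrans mu_d' mu_ac); rewrite permK.
  by move: same_ac; rewrite /sameblk /a' /c'; lia.
have ac' : (a' < c')%N.
  case: ltngtP => // [ca|/val_inj eq_ac]; last first.
    by move/(congr1 v)/eqP: eq_ac; rewrite !permKV (negbTE (adjacent_neq dd')).
  by have := v_blocks ca; rewrite /sameblk eq_sym => /(_ same'); rewrite !permKV dd'; lia.
apply/existsP; exists a'; apply/existsP; exists c'.
by rewrite ac' same' /Wact /= !permKV -dd' mu_d mu_d' subrr oppr0 !eqxx.
Qed.

Lemma ltn_XltE (a c : 'I_N) : (v a < v c)%N = Xlt b (fun a => mu (v a)) a c.
Proof.
have lt_Xlt a' c' : (v a' < v c')%N -> Xlt b (fun a => mu (v a)) a' c'.
  move=> vac; rewrite /Xlt.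
  have := mu_mono (ltnW vac); rewrite le_eqVlt => /orP[/eqP mu_ac|->//].
  rewrite mu_ac ltxx eqxx /=.
  have := level_blk_antitone (ltnW vac) mu_ac.
  rewrite !permK leq_eqVlt => /orP[/eqP blk_ac|->//].
  rewrite blk_ac eqxx ltnn /=; case: ltngtP => // [ca|/val_inj eq_ac].
    by have := v_blocks ca; rewrite /sameblk blk_ac eqxx => /(_ isT); lia.
  by rewrite eq_ac ltnn in vac.
apply/idP/idP => [|X_ac]; first exact: lt_Xlt.
rewrite ltnNge leq_eqVlt; apply/negP => /orP[/eqP/val_inj/perm_inj eq_ca|/lt_Xlt X_ca].
  by rewrite eq_ca Xlt_irr in X_ac.
by have := @Xlt_trans N b _ c a a X_ac X_ca; rewrite Xlt_irr.
Qed.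

End LevelSets.

Lemma card_ord_lt N k : (k <= N)%N -> #|[set p : 'I_N | (p < k)%N]| = k.
Proof.
move=> kN; have -> : [set p : 'I_N | (p < k)%N] = widen_ord kN @: [set: 'I_k].
  apply/setP => p; rewrite inE; apply/idP/imsetP => [lt_pk|[i _ ->]] /=; last exact: ltn_ord.
  by exists (Ordinal lt_pk); rewrite ?inE //; apply: val_inj.
rewrite card_imset ?cardsT ?card_ord // => i j /(congr1 val) eq_ij.
exact: val_inj.
Qed.

Lemma perm_val_card N (v : {perm 'I_N}) (a : 'I_N) : (v a : nat) = #|[set c | (v c < v a)%N]|.
Proof.
have -> : [set c | (v c < v a)%N] = v @^-1: [set p : 'I_N | (p < v a)%N].
  by apply/setP => c; rewrite !inE.
by rewrite card_preimset ?card_ord_lt //; [apply: ltnW | apply: perm_inj].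
Qed.

Lemma perm_ltn_inj N (v v' : {perm 'I_N}) :
  (forall a c, (v a < v c)%N = (v' a < v' c)%N) -> v = v'.
Proof.
move=> same_order; apply/permP => a; apply: val_inj => /=.
by rewrite (perm_val_card v) (perm_val_card v'); apply: eq_card => c; rewrite !inE same_order.
Qed.

Section RankPerm.

Variables (N : nat) (R : rel 'I_N).
Hypotheses (R_irr : irreflexive R) (R_trans : transitive R)
  (R_total : forall a c, a != c -> R a c || R c a).

Definition rank (a : 'I_N) : nat := #|[set c | R c a]|.

Lemma rank_lt a : (rank a < N)%N.
Proof.
rewrite -[X in (_ < X)%N]card_ord -cardsT; apply: proper_card; apply/properP.
by split; [apply/fintype.subsetP => z; rewrite inE | exists a; rewrite ?inE ?R_irr].
Qed.

Lemma rank_mono : {homo rank : a c / R a c >-> (a < c)%N}.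
Proof.
move=> a c Rac; apply: proper_card; apply/properP; split.
  by apply/fintype.subsetP => z; rewrite !inE => /R_trans; apply.
by exists a; rewrite ?inE ?R_irr.
Qed.

Lemma ltn_rank a c : (rank a < rank c)%N = R a c.
Proof.
apply/idP/idP => [lt_ac|]; last exact: rank_mono.
have [eq_ac|ne_ac] := eqVneq a c; first by rewrite eq_ac ltnn in lt_ac.
case/orP: (R_total ne_ac) => // /rank_mono lt_ca.
by have := ltn_trans lt_ac lt_ca; rewrite ltnn.
Qed.

Lemma rank_inj : injective (fun a => Ordinal (rank_lt a)).
Proof.
move=> a c /(congr1 val) /= eq_rank; apply/eqP; apply: contraT => ne_ac.
by case/orP: (R_total ne_ac); rewrite -ltn_rank eq_rank ltnn.
Qed.

Definition rank_perm : {perm 'I_N} := perm rank_inj.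

Lemma ltn_rank_perm a c : (rank_perm a < rank_perm c)%N = R a c.
Proof. by rewrite !permE ltn_rank. Qed.

End RankPerm.

Lemma Wmul_Wbar_level N (w : {perm 'I_N}) (x : Welt N) (a : 'I_N) :
  (Wmul (Wbar w) x).1 ((Wmul (Wbar w) x).2 a) = x.1 (x.2 a).
Proof. by rewrite /Wmul /Wbar /wact_wt /= !ffunE permM permK add0r. Qed.

Lemma in_Wup_Wmul_X N b (x : Welt N) (w : {perm 'I_N}) :
  in_X b x -> in_Wbarup (beta_of b x) w -> in_Wup b (Wmul (Wbar w) x).
Proof.
case: x => mu v /in_XP[/= v_blocks mu_mono mu_level] /in_WbarupP w_blocks.
apply/in_WupP => a c ac same_ac; rewrite /Wprec !Wmul_Wbar_level /= !permM.
have vac := v_blocks _ _ ac same_ac.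
have /orP[/eqP mu_ac|->//] : (mu (v a) == mu (v c)) || (mu (v a) < mu (v c)).
  by rewrite -le_eqVlt mu_mono // ltnW.
by rewrite mu_ac ltxx eqxx w_blocks // level_sameblk_beta.
Qed.

(* An element of [X^beta] is determined by its levels [a |-> mu (v a)]: they fix the
   order [Xlt] that [v] realises, hence [v], hence [mu]. *)
Lemma in_X_level_inj N b (x x' : Welt N) : in_X b x -> in_X b x' ->
  (forall a, x.1 (x.2 a) = x'.1 (x'.2 a)) -> x = x'.
Proof.
case: x x' => mu v [mu' v'] /in_XP[/= vb mm ml] /in_XP[/= vb' mm' ml'] /= level.
have ev : v = v'.
  apply: perm_ltn_inj => a c.
  by rewrite (ltn_XltE vb mm ml) (ltn_XltE vb' mm' ml') /Xlt !level.
subst v'; congr pair; apply/ffunP => p.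
by rewrite -(permKV v p) level.
Qed.

Lemma Wmul_Wbar_X_inj N b (x x' : Welt N) (w w' : {perm 'I_N}) :
  in_X b x -> in_X b x' -> Wmul (Wbar w) x = Wmul (Wbar w') x' -> x = x' /\ w = w'.
Proof.
move=> Xx Xx' eq_wx.
have ex : x = x'.
  by apply: in_X_level_inj Xx Xx' _ => a; rewrite -(Wmul_Wbar_level w) eq_wx Wmul_Wbar_level.
by split=> //; subst x'; apply: (mulgI x.2); move/(congr1 snd): eq_wx.
Qed.

Section Decomposition.

Variables (N : nat) (b : seq nat) (nu : weight N) (pi : {perm 'I_N}).
Hypothesis y_blocks : forall a c : 'I_N, (a < c)%N -> sameblk b a c -> Wprec (nu, pi) a c.

Definition level (a : 'I_N) : int := nu (pi a).

(* [y = t_nu pi] factors as [w x] with [x = t_mu v]: [v] sorts the indices by [Xlt],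
   [mu] transports the levels along [v], and [w = v^-1 pi]. *)
Definition Xperm : {perm 'I_N} :=
  rank_perm (@Xlt_irr N b level) (@Xlt_trans N b level) (@Xlt_total N b level).

Definition Xweight : weight N := [ffun p => level ((Xperm^-1)%g p)].

Definition Wbar_factor : {perm 'I_N} := ((Xperm^-1)%g * pi)%g.

Lemma ltn_Xperm a c : (Xperm a < Xperm c)%N = Xlt b level a c.
Proof. exact: ltn_rank_perm. Qed.

Lemma Xweight_Xperm a : Xweight (Xperm a) = level a.
Proof. by rewrite ffunE permK. Qed.

Lemma level_mono a c : (Xperm a <= Xperm c)%N -> level a <= level c.
Proof.
rewrite leq_eqVlt => /orP[/eqP/val_inj/perm_inj-> // | ].
by rewrite ltn_Xperm /Xlt; lia.
Qed.

Lemma Xfactor_in_X : in_X b (Xweight, Xperm).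
Proof.
apply/in_XP; split=> /= [a c ac same_ac | p q pq | p p' pp' mu_pp'].
- have := y_blocks ac same_ac; move: same_ac.
  by rewrite ltn_Xperm /Wprec /Xlt /sameblk /= -/(level a) -/(level c); lia.
- by rewrite -(permKV Xperm p) -(permKV Xperm q) !Xweight_Xperm level_mono ?permKV.
apply/negP => /existsP[a /existsP[c /and4P[ac not_same /eqP va /eqP vc]]].
have ea : Xperm a = p by apply: val_inj.
have ec : Xperm c = p' by apply: val_inj; rewrite /= vc pp'.
move: mu_pp'; rewrite -ea -ec !Xweight_Xperm => level_ac.
have := ltn_Xperm a c; rewrite ea ec pp' ltnSn /Xlt level_ac => /esym.
by have := blk_mono b (ltnW ac); move: not_same; rewrite /sameblk; lia.
Qed.

Lemma Wbar_factor_in_Wbarup : in_Wbarup (beta_of b (Xweight, Xperm)) Wbar_factor.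
Proof.
apply/in_WbarupP => p q pq same_pq.
apply: (@chain_adjacent _ (fun p q => Wbar_factor p < Wbar_factor q)%N _ _ _ _ pq).
  by move=> ? ? ?; apply: ltn_trans.
move=> d d' dd' pd d'q; have lt_dN : (d.+1 < N)%N by rewrite -dd'.
have := sameblk_inner pd (_ : (d <= d')%N) d'q same_pq; rewrite dd' => /(_ (leqnSn d)).
rewrite /beta_of sameblk_part_of_pred //.
case/existsP => a /existsP[c /and3P[ac same_ac /and3P[/eqP va /eqP vc /eqP lvl]]].
have ea : Xperm a = d by apply: val_inj.
have ec : Xperm c = d' by apply: val_inj; rewrite /= vc dd'.
rewrite /Wbar_factor !permM -ea -ec !permK.
have := y_blocks ac same_ac; move: lvl; rewrite /Wprec /= !Xweight_Xperm /level.
by move/eqP; rewrite sub0r oppr_eq0 subr_eq0 => /eqP->; rewrite ltxx eqxx.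
Qed.

Lemma Wmul_Wbar_factor : Wmul (Wbar Wbar_factor) (Xweight, Xperm) = (nu, pi).
Proof.
rewrite /Wmul /Wbar /Wbar_factor /=; congr pair; last by rewrite mulKVg.
apply/ffunP => p.
by rewrite !ffunE add0r invMg invgK permM permK /level permKV.
Qed.

End Decomposition.

Local Close Scope ring_scope.

Theorem corollary2p18 (N : nat) (HN : (2 <= N)%N) (b : seq nat) (Hb : ordpart N b) :
  (forall x : Welt N, in_X b x ->
     forall w : {perm 'I_N}, in_Wbarup (beta_of b x) w ->
       in_Wup b (Wmul (Wbar w) x))
  /\
  (forall (x x' : Welt N) (w w' : {perm 'I_N}),
     in_X b x -> in_Wbarup (beta_of b x) w ->
     in_X b x' -> in_Wbarup (beta_of b x') w' ->
     Wmul (Wbar w) x = Wmul (Wbar w') x' -> x = x' /\ w = w')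
  /\
  (forall y : Welt N, in_Wup b y ->
     exists (x : Welt N) (w : {perm 'I_N}),
       [/\ in_X b x, in_Wbarup (beta_of b x) w & y = Wmul (Wbar w) x]).
Proof.
split; first by move=> x Xx w; apply: in_Wup_Wmul_X.
split; first by move=> x x' w w' Xx _ Xx' _; apply: Wmul_Wbar_X_inj Xx Xx'.
case=> nu pi /in_WupP y_blocks.
exists (Xweight b nu pi, Xperm b nu pi), (Wbar_factor b nu pi); split.
- exact: Xfactor_in_X.
- exact: Wbar_factor_in_Wbarup.
- by rewrite Wmul_Wbar_factor.
Qed.
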